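(* Let $\mu$ be a Borel probability measure on $\mathbb{T}^n$ and let $(B_1,\dots,B_n)$ be an $n$-tuple of matrices in $M_n(\mathbb{Z})$ which is strongly independent over $\mathbb{Q}$. If there is a nonzero $k\in\mathbb{Z}^{n\times 1}$ such that $\hat\mu(B_ik)=1$ for every $1\le i\le n$, then $\mu$ is finitely supported.
   Context: For $k=(k_1,\dots,k_n)^T\in\mathbb{Z}^{n\times 1}$ and $z=(z_1,\dots,z_n)\in\mathbb{T}^n$, $z^k=z_1^{k_1}\cdots z_n^{k_n}$ and $\hat\mu(k)=\int_{\mathbb{T}^n}z^k\,d\mu(z)$. An $n$-tuple $(B_1,\dots,B_n)$ of integer $n\times n$ matrices is strongly independent over $\mathbb{Q}$ if for every nonzero $v\in\mathbb{Q}^{n\times 1}$ the vectors $B_1v,\dots,B_nv$ are linearly independent over $\mathbb{Q}$. *)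

From HB Require Import structures.
From mathcomp Require Import all_boot all_order all_algebra.
From mathcomp Require Import all_classical all_reals all_analysis.
Set Implicit Arguments. Unset Strict Implicit. Unset Printing Implicit Defensive.
Import Order.TTheory GRing.Theory Num.Theory.
Import numFieldNormedType.Exports.
Local Open Scope classical_set_scope.
Local Open Scope ring_scope.

(* Model of the torus T^n: R^n (column vectors) with its Borel sigma-algebra;
   a point x of R^n represents z = (exp(2 pi i x_1), ..., exp(2 pi i x_n)).
   Borel probability measures on T^n are identified with Borel probability
   measures on R^n concentrated on the fundamental domain [0,1)^n. *)
Notation borelRn R n := (g_sigma_algebraType (@open 'cV[R]_n)).

Definition fund_domain (R : realType) (n : nat) : set (borelRn R n) :=
  [set x | forall j : 'I_n, 0 <= x j 0 < 1].

(* k . x = sum_j k_j x_j, so that z^k = exp(2 pi i (k . x)). *)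
Definition kdot (R : realType) (n : nat) (k : 'cV[int]_n) (x : 'cV[R]_n) : R :=
  \sum_(j < n) (k j 0)%:~R * x j 0.

(* Real and imaginary parts of the Fourier coefficient
   hat mu(k) = \int z^k dmu(z). *)
Definition fourier_re (R : realType) (n : nat)
  (mu : probability (borelRn R n) R) (k : 'cV[int]_n) : \bar R :=
  (\int[mu]_x (cos (2 * pi * kdot k x))%:E)%E.

Definition fourier_im (R : realType) (n : nat)
  (mu : probability (borelRn R n) R) (k : 'cV[int]_n) : \bar R :=
  (\int[mu]_x (sin (2 * pi * kdot k x))%:E)%E.

Definition fourier_eq1 (R : realType) (n : nat)
  (mu : probability (borelRn R n) R) (k : 'cV[int]_n) : Prop :=
  fourier_re mu k = 1%E /\ fourier_im mu k = 0%E.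

Definition int_to_rat_mx (m p : nat) (A : 'M[int]_(m, p)) : 'M[rat]_(m, p) :=
  map_mx (fun z : int => z%:~R) A.

Definition strongly_independent (n : nat) (B : 'I_n -> 'M[int]_n) : Prop :=
  forall v : 'cV[rat]_n, v != 0 ->
    free [seq int_to_rat_mx (B i) *m v | i <- enum 'I_n].

Definition finitely_supported (R : realType) (n : nat)
  (mu : probability (borelRn R n) R) : Prop :=
  exists S : seq 'cV[R]_n, mu [set` S] = 1%E.

(* Since cos <= 1, Re hat mu(m) = 1 already forces cos (2 pi m.x) = 1, i.e.
   m.x in Z, for mu-almost every x.  Applied to the rows m = B_i k of the integer
   matrix W, this gives W x in Z^n almost everywhere.  Strong independence makes
   W nonsingular, so det W * x = adj W (W x) lies in Z^n as well, and a point of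
   [0,1)^n with this property lies on the finite grid (1/|det W|) Z^n; that grid
   therefore has full measure. *)

From HB Require Import structures.
From mathcomp Require Import all_boot all_order all_algebra.
From mathcomp Require Import all_classical all_reals all_analysis.
From mathcomp Require Import measurable_realfun lra.
Set Implicit Arguments. Unset Strict Implicit. Unset Printing Implicit Defensive.
Import Order.TTheory GRing.Theory Num.Theory.
Import numFieldNormedType.Exports.
Local Open Scope classical_set_scope.
Local Open Scope ring_scope.

Section Trigonometry.
Variable R : realType.

Lemma cosDz2pi (x : R) (z : int) : cos (x + pi *+ 2 * z%:~R) = cos x.
Proof.
case: z => m; first by rewrite mulr_natr (periodicn (@cosD2pi R)).
rewrite NegzE intrN mulrN pmulrn mulr_natr.
by rewrite -{2}[x](subrK ((pi *+ 2) *+ m.+1)) (periodicn (@cosD2pi R)).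
Qed.

Lemma cos2pi_eq1_int (t : R) : cos (2 * pi * t) = 1 -> t \is a Num.int.
Proof.
set r := Num.floor (t + 2^-1); set u := t - r%:~R.
(* [r] is the integer nearest to [t], so [2 pi |u|] lies in [[0, pi]], where
   cos is injective. *)
have [u_ge u_lt] : - 2^-1 <= u /\ u < 2^-1.
  have := floor_le (t + 2^-1); have := floorD1_gt (t + 2^-1).
  rewrite intrD -/r /u; lra.
have tE : t = u + r%:~R by rewrite subrK.
rewrite tE mulrDr mulr_natl cosDz2pi => cos_u.
suff : `|pi *+ 2 * u| = 0.
  move/eqP; rewrite normr_eq0 mulf_eq0 mulrn_eq0 (gt_eqF (pi_gt0 R)) /=.
  by move/eqP->; rewrite add0r intr_int.
have pi0 : 0 <= pi :> R := ltW (pi_gt0 R).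
apply: cos_inj; rewrite ?cos_norm ?cos0 // !in_itv /=; last by rewrite lexx pi0.
rewrite normr_ge0 normrM ger0_norm /=; last exact: mulrn_wge0.
rewrite -mulr_natr -mulrA ler_piMr //.
by case: (ler0P u) => _; lra.
Qed.
End Trigonometry.

Section ProbabilityAe.
Context d (T : measurableType d) (R : realType) (mu : probability T R).

Lemma probability_eq1_ae (A : set T) :
  measurable A -> mu A = 1%E <-> {ae mu, forall x, A x}.
Proof.
move=> mA; have mCA := measurableC mA.
rewrite -[X in _ <-> X]/(mu.-negligible (~` A)) negligibleP //.
change (mu A = 1%E <-> mu (~` A) = 0%E).
split=> [muA|muCA]; first by rewrite probability_setC // muA subee.
by rewrite -(setCK A) probability_setC // muCA sube0.
Qed.

Lemma integral_eq1_ae_eq1 (f : T -> R) : measurable_fun setT f ->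
  (forall x, `|f x| <= 1) -> (\int[mu]_x (f x)%:E = 1)%E ->
  {ae mu, forall x, f x = 1}.
Proof.
move=> mf f_le1 int_f.
have int1 : mu.-integrable setT (EFin \o cst (1 : R)).
  exact: finite_measure_integrable_cst.
have intf : mu.-integrable setT (EFin \o f).
  apply: (le_integrable measurableT _ _ int1) => //; first exact/measurable_EFinP.
  by move=> x _ /=; rewrite normr1 lee_fin.
have m1f : measurable_fun setT (fun x => (1 - f x)%:E).
  by apply/measurable_EFinP; apply: measurable_funB.
have : (\int[mu]_x `|(1 - f x)%:E| = 0)%E.
  transitivity (\int[mu]_x ((cst 1 x)%:E - (f x)%:E))%E.
    apply: eq_integral => x _; rewrite gee0_abs // lee_fin subr_ge0.
    exact: le_trans (ler_norm _) (f_le1 x).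
  rewrite integralB_EFin // int_f -[X in (X - _)%E]/(\int[mu]_x (cst 1%E x))%E.
  rewrite integral_cst // mul1e; change (mu setT - 1 = 0)%E.
  by rewrite probability_setT subee.
move/(ae_eq_integral_abs mu measurableT m1f).
by apply: filterS => x /(_ I) /eqP; rewrite eqe subr_eq0 => /eqP.
Qed.
End ProbabilityAe.

Section BorelSets.
Variable T : ptopologicalType.

Lemma closed_measurable_borel (A : set T) :
  closed A -> measurable (A : set (g_sigma_algebraType (@open T))).
Proof.
move=> cA; rewrite -[A]setCK; apply: measurableC; apply: sub_sigma_algebra.
exact: closed_openC.
Qed.

Lemma continuous_measurable_borel (R : realType) (f : T -> R) :
  continuous f -> measurable_fun (setT : set (g_sigma_algebraType (@open T))) f.
Proof.
move=> cf; apply: (measurability _ (RGenOpens.measurableE R)).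
move=> _ [_ [a [b ->]] <-]; rewrite setTI; apply: sub_sigma_algebra.
exact/(continuousP f).1/interval_open.
Qed.

End BorelSets.

Section BorelRn.
Variables (R : realType) (n : nat).

Lemma measurable_finite_set (s : seq 'cV[R]_n) :
  measurable ([set` s] : set (borelRn R n)).
Proof.
apply: closed_measurable_borel.
have /accessible_finite_set_closed : accessible_space 'cV[R]_n.
  by apply: hausdorff_accessible; apply: norm_hausdorff.
by move=> closed_fin; apply: closed_fin; exact: finite_seq s.
Qed.

Lemma measurable_coord (j : 'I_n) :
  measurable_fun (setT : set (borelRn R n)) (fun x : 'cV[R]_n => x j 0).
Proof. apply: continuous_measurable_borel; exact: coord_continuous. Qed.

Lemma measurable_fund_domain : measurable (@fund_domain R n).
Proof.
have -> : @fund_domain R n =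
    \bigcap_(j in [set: 'I_n]) ((fun x : borelRn R n => x j 0) @^-1` `[0, 1[%classic).
  apply/seteqP; split => x /=.
    by move=> h j _ /=; rewrite in_itv /=; exact: h.
  by move=> h j; have := h j I; rewrite /= in_itv.
apply: fin_bigcap_measurable; first exact: finite_finset.
by move=> j _; rewrite -[_ @^-1` _]setTI; apply: measurable_coord.
Qed.

Lemma measurable_kdot (k : 'cV[int]_n) :
  measurable_fun (setT : set (borelRn R n)) (@kdot R n k).
Proof.
apply: measurable_sum => j.
by apply: measurable_funM; [exact: measurable_cst|exact: measurable_coord].
Qed.

Lemma measurable_cos_kdot (k : 'cV[int]_n) :
  measurable_fun (setT : set (borelRn R n)) (fun x => cos (2 * pi * kdot k x)).
Proof.
apply: measurableT_comp (continuous_measurable_fun (@continuous_cos R)) _.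
by apply: measurable_funM; [exact: measurable_cst|exact: measurable_kdot].
Qed.

End BorelRn.

Lemma free_rows_det_neq0 (F : fieldType) (n : nat) (v : 'I_n -> 'cV[F]_n) :
  free [seq v i | i <- enum 'I_n] -> \det (\matrix_i (v i)^T) != 0.
Proof.
move=> v_free; have /freeP v_indep : free (map_tuple v (ord_tuple n)).
  by rewrite -[enum 'I_n]val_ord_tuple in v_free.
apply/det0P => -[u /eqP + /rowP uV0]; apply; apply/rowP => i.
rewrite mxE; apply: v_indep => {i}; apply/colP => j.
rewrite summxE; transitivity ((u *m \matrix_i (v i)^T) 0 j); last by rewrite uV0 !mxE.
rewrite mxE; apply: eq_bigr => i _.
by rewrite -tnth_nth tnth_map tnth_ord_tuple !mxE.
Qed.

Definition freq_mx (n : nat) (B : 'I_n -> 'M[int]_n) (k : 'cV[int]_n) : 'M[int]_n :=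
  \matrix_i (B i *m k)^T.

Lemma freq_mx_det_neq0 (n : nat) (B : 'I_n -> 'M[int]_n) (k : 'cV[int]_n) :
  strongly_independent B -> k != 0 -> \det (freq_mx B k) != 0.
Proof.
move=> B_indep k_neq0.
have kQ_neq0 : int_to_rat_mx k != 0.
  apply: contraNneq k_neq0 => kQ0; apply/eqP/matrixP => i j.
  by move: kQ0 => /matrixP/(_ i j); rewrite !mxE => /eqP; rewrite intr_eq0 => /eqP.
have := free_rows_det_neq0 (B_indep _ kQ_neq0).
rewrite -(intr_eq0 rat) -det_map_mx /int_to_rat_mx.
congr (\det _ != 0); apply/matrixP => i j.
by rewrite !mxE rmorph_sum; apply: eq_bigr => l _; rewrite !mxE rmorphM.
Qed.

Lemma det_mul_coord_int (R : archiNumDomainType) (n : nat)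
    (W : 'M[int]_n) (x : 'cV[R]_n) :
  (forall i, (map_mx intr W *m x) i 0 \is a Num.int) ->
  forall j, (\det W)%:~R * x j 0 \is a Num.int.
Proof.
move=> Wx_int j.
have -> : (\det W)%:~R * x j 0 = (map_mx intr (\adj W) *m (map_mx intr W *m x)) j 0.
  by rewrite mulmxA -map_mxM mul_adj_mx map_scalar_mx mul_scalar_mx mxE.
rewrite mxE; apply: rpred_sum => i _; apply: rpredM (Wx_int i).
by rewrite mxE intr_int.
Qed.

Lemma freq_mx_mulmxE (R : realType) (n : nat) (B : 'I_n -> 'M[int]_n) (k : 'cV[int]_n)
    (x : 'cV[R]_n) (i : 'I_n) :
  (map_mx intr (freq_mx B k) *m x) i 0 = kdot (B i *m k) x.
Proof. by rewrite mxE; apply: eq_bigr => j _; rewrite !mxE. Qed.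

Definition grid (R : numFieldType) (n d : nat) : seq 'cV[R]_n :=
  [seq \col_j ((f j)%:R / d%:R) | f : {ffun 'I_n -> 'I_d} <- enum {ffun 'I_n -> 'I_d}].

Lemma mem_grid (R : realType) (n : nat) (D : int) (x : 'cV[R]_n) :
  D != 0 -> fund_domain x -> (forall j, D%:~R * x j 0 \is a Num.int) ->
  x \in grid R n `|D|.
Proof.
move=> D_neq0 x_dom Dx_int; set d := `|D|%N.
have dR_neq0 : d%:R != 0 :> R by rewrite pnatr_eq0 absz_eq0.
have dx_nat j : d%:R * x j 0 \is a Num.nat.
  have /andP[x_ge0 _] := x_dom j.
  by rewrite -[x j 0]ger0_norm // natr_absz intr_norm -normrM natr_norm_int.
have dx_lt j : (Num.truncn (d%:R * x j 0)%R < d)%N.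
  have /andP[_ x_lt1] := x_dom j.
  rewrite -(ltr_nat R) truncnK // -[X in _ < X]mulr1 ltr_pM2l // lt0r dR_neq0.
  by rewrite ler0n.
apply/mapP; exists [ffun j => Ordinal (dx_lt j)]; first by rewrite mem_enum.
by apply/colP => j; rewrite !mxE ffunE /= truncnK // mulrC mulKf.
Qed.

Lemma fourier_re_eq1_kdot_int (R : realType) (n : nat)
    (mu : probability (borelRn R n) R) (k : 'cV[int]_n) :
  fourier_re mu k = 1%E -> {ae mu, forall x, kdot k x \is a Num.int}.
Proof.
move=> re_eq1; have := integral_eq1_ae_eq1 (measurable_cos_kdot k) (fun x => cos_max _) re_eq1.
by apply: filterS => x; exact: cos2pi_eq1_int.
Qed.

Theorem lemma4p4 (R : realType) (n : nat)
  (mu : probability (borelRn R n) R)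
  (Hmu : mu (@fund_domain R n) = 1%E)
  (B : 'I_n -> 'M[int]_n)
  (HB : strongly_independent B) :
  (exists k : 'cV[int]_n, k != 0 /\ forall i : 'I_n, fourier_eq1 mu (B i *m k)) ->
  finitely_supported mu.
Proof.
move=> [k [k_neq0 hat_mu_eq1]]; set W := freq_mx B k.
have ae_dom := (probability_eq1_ae mu (@measurable_fund_domain R n)).1 Hmu.
have ae_int : {ae mu, forall x, forall i, kdot (B i *m k) x \is a Num.int}.
  by apply: filter_forall => i; exact: fourier_re_eq1_kdot_int (hat_mu_eq1 i).1.
exists (grid R n `|\det W|); apply/(probability_eq1_ae mu (measurable_finite_set _)).
apply: (filterS2 (ae_filter_ringOfSetsType mu) _ ae_dom ae_int) => x x_dom x_int.
apply: mem_grid (freq_mx_det_neq0 HB k_neq0) x_dom (det_mul_coord_int _) => i.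
by rewrite freq_mx_mulmxE.
Qed.
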